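(* Let $\alpha\ge 0$, $\beta\in\mathbb{R}$, $\gamma\ge 0$, and let $a\in C^2(\mathbb{R}_+)$ satisfy the differential equation $$-(x+\gamma)\,a''(x)-2a'(x)+(\alpha x+\beta)\,a(x)=0,\qquad x>0 .$$ Let $A$ be the Hankel operator $(Af)(x)=\int_0^\infty a(x+y)f(y)\,dy$ and let $L$ be the differential operator $$L=-\frac{d}{dx}\,(x^2+\gamma x)\,\frac{d}{dx}+\alpha x^2+\beta x .$$ Let $f\in C^2(\mathbb{R}_+)$ satisfy $$\lim_{y\to 0}(y^2+\gamma y)f(y)=\lim_{y\to 0}(y^2+\gamma y)f'(y)=0$$ and, for all $x\ge 0$, $$\lim_{y\to\infty}a'(x+y)(y^2+\gamma y)f(y)=\lim_{y\to\infty}a(x+y)(y^2+\gamma y)f'(y)=0 .$$ Then $(LA-AL)f=0$, i.e. $L(Af)=A(Lf)$ on $(0,\infty)$.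
   Context: $\mathbb{R}_+=(0,\infty)$. Here $L$ is understood as a formal differential expression acting on $C^2$ functions on $\mathbb{R}_+$ and $A$ as the integral expression above; it is tacitly assumed (as in the paper) that the integrals defining $Af$, $A(Lf)$ converge and that differentiation under the integral sign in $L(Af)$ is permitted. *)

From Stdlib Require Import Reals.
From Coquelicot Require Import Coquelicot.
Open Scope R_scope.

Definition C2_pos (f : R -> R) : Prop :=
  forall x, 0 < x ->
    ex_derive f x /\ ex_derive (Derive f) x /\ continuous (Derive_n f 2) x.

Definition int0inf (g : R -> R) : R :=
  RInt_gen g (at_right 0) (Rbar_locally p_infty).
Definition ex_int0inf (g : R -> R) : Prop :=
  ex_RInt_gen g (at_right 0) (Rbar_locally p_infty).

Definition Hankel (a f : R -> R) (x : R) : R :=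
  int0inf (fun y => a (x + y) * f y).

Definition Lop (alpha beta gamma : R) (g : R -> R) (x : R) : R :=
  - Derive (fun t => (t ^ 2 + gamma * t) * Derive g t) x
  + (alpha * x ^ 2 + beta * x) * g x.

(* Fix x > 0 and put p(y) = y^2 + gamma y.  Integrating by parts twice in y,
   a(x+y) (L f)(y) is the derivative of the concomitant
   p(y) (a'(x+y) f(y) - a(x+y) f'(y)), whose boundary values vanish by the
   hypotheses on f, plus a combination of a, a', a'' at x + y against f(y).
   The differential equation for a at x + y turns that combination into the
   one produced by applying L in x to (A f)(x) = int a(x+y) f(y) dy. *)

From Stdlib Require Import Reals Lra.
From Coquelicot Require Import Coquelicot.
Open Scope R_scope.

Section FilterlimArith.
Context {T : Type} {F : (T -> Prop) -> Prop} {FF : Filter F}.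

Lemma filterlim_Rmult (u v : T -> R) (lu lv : R) :
  filterlim u F (locally lu) -> filterlim v F (locally lv) ->
  filterlim (fun t => u t * v t) F (locally (lu * lv)).
Proof.
  intros Hu Hv.
  exact (filterlim_comp_2 u v Rmult Hu Hv (filterlim_mult (K := R_AbsRing) lu lv)).
Qed.

Lemma filterlim_Rminus (u v : T -> R) (lu lv : R) :
  filterlim u F (locally lu) -> filterlim v F (locally lv) ->
  filterlim (fun t => u t - v t) F (locally (lu - lv)).
Proof.
  intros Hu Hv.
  apply (filterlim_comp_2 (H := locally (- lv)) u (fun t => - v t) Rplus Hu).
  - exact (filterlim_comp _ _ _ v Ropp F (locally lv) (locally (- lv)) Hv
             (filterlim_opp (V := R_NormedModule) lv)).
  - exact (filterlim_plus (V := R_NormedModule) lu (- lv)).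
Qed.

End FilterlimArith.

Lemma continuous_Rmult (u v : R -> R) (y : R) :
  continuous u y -> continuous v y -> continuous (fun t => u t * v t) y.
Proof. intros. apply (continuous_mult (K := R_AbsRing)); assumption. Qed.

Lemma continuous_Rplus (u v : R -> R) (y : R) :
  continuous u y -> continuous v y -> continuous (fun t => u t + v t) y.
Proof. intros. apply (continuous_plus (V := R_NormedModule)); assumption. Qed.

Lemma continuous_Rminus (u v : R -> R) (y : R) :
  continuous u y -> continuous v y -> continuous (fun t => u t - v t) y.
Proof. intros. apply (continuous_minus (V := R_NormedModule)); assumption. Qed.

Lemma locally_pos (y : R) : 0 < y -> locally y (fun t => 0 < t).
Proof.
  intros Hy. exists (mkposreal y Hy). intros t Ht.
  unfold ball in Ht; simpl in Ht; unfold AbsRing_ball, abs, minus, plus, opp in Ht; simpl in Ht.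
  apply Rabs_def2 in Ht. lra.
Qed.

Lemma filterlim_shift_at_right (g : R -> R) (x : R) :
  continuous g x -> filterlim (fun y => g (x + y)) (at_right 0) (locally (g x)).
Proof.
  intros Hg. apply filterlim_comp with (G := locally x); [|exact Hg].
  intros P [eps HP]. exists eps. intros y Hy _. apply HP.
  unfold ball in *; simpl in *; unfold AbsRing_ball, abs, minus, plus, opp in *; simpl in *.
  replace (x + y + - x) with (y + - 0) by ring. exact Hy.
Qed.

Lemma continuous_shift (g : R -> R) (x y : R) :
  continuous g (x + y) -> continuous (fun t => g (x + t)) y.
Proof.
  intros Hg. apply (continuous_comp (fun t => x + t) g); [|exact Hg].
  apply (ex_derive_continuous (fun t => x + t)). auto_derive. auto.
Qed.

Lemma is_RInt_gen_int0inf (g : R -> R) :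
  ex_int0inf g -> is_RInt_gen g (at_right 0) (Rbar_locally p_infty) (int0inf g).
Proof.
  intros H. unfold int0inf.
  exact (RInt_gen_correct (V := R_CompleteNormedModule)
           (Fa := at_right 0) (Fb := Rbar_locally p_infty) g H).
Qed.

Lemma filter_prod_between_pos (P : R -> Prop) :
  (forall y, 0 < y -> P y) ->
  filter_prod (at_right 0) (Rbar_locally p_infty) (fun ab =>
    forall y, Rmin (fst ab) (snd ab) <= y <= Rmax (fst ab) (snd ab) -> P y).
Proof.
  intros HP. apply Filter_prod with (fun a => 0 < a) (fun b => 0 < b).
  - exists (mkposreal 1 Rlt_0_1). intros y _ Hy. exact Hy.
  - exists 0. auto.
  - intros a b Ha Hb y Hy; simpl in Hy. apply HP.
    assert (0 < Rmin a b) by (apply Rmin_glb_lt; auto). lra.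
Qed.

Lemma is_RInt_gen_Derive_pos (H : R -> R) (l0 l1 : R) :
  (forall y, 0 < y -> ex_derive H y) ->
  (forall y, 0 < y -> continuous (Derive H) y) ->
  filterlim H (at_right 0) (locally l0) ->
  filterlim H (Rbar_locally p_infty) (locally l1) ->
  is_RInt_gen (Derive H) (at_right 0) (Rbar_locally p_infty) (l1 - l0).
Proof.
  intros dH cH H0 H1.
  apply is_RInt_gen_Derive; auto; apply filter_prod_between_pos; assumption.
Qed.

Lemma is_RInt_gen_ext_pos (g h : R -> R) (l : R) :
  (forall y, 0 < y -> g y = h y) ->
  is_RInt_gen g (at_right 0) (Rbar_locally p_infty) l ->
  is_RInt_gen h (at_right 0) (Rbar_locally p_infty) l.
Proof.
  intros E. apply is_RInt_gen_ext.
  apply filter_imp with (2 := filter_prod_between_pos _ E).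
  intros ab Hab y Hy. apply Hab. lra.
Qed.

Lemma Lop_Hankel (alpha beta gamma : R) (a f : R -> R) (x : R) :
  0 < x ->
  (forall t, 0 < t ->
     is_derive (Hankel a f) t (int0inf (fun y => Derive a (t + y) * f y))) ->
  is_derive (fun t => int0inf (fun y => Derive a (t + y) * f y)) x
            (int0inf (fun y => Derive_n a 2 (x + y) * f y)) ->
  Lop alpha beta gamma (Hankel a f) x =
    - (2 * x + gamma) * int0inf (fun y => Derive a (x + y) * f y)
    - (x ^ 2 + gamma * x) * int0inf (fun y => Derive_n a 2 (x + y) * f y)
    + (alpha * x ^ 2 + beta * x) * Hankel a f x.
Proof.
  intros Hx DA DB.
  assert (E : Derive (fun t => (t ^ 2 + gamma * t) * Derive (Hankel a f) t) x =
      (2 * x + gamma) * int0inf (fun y => Derive a (x + y) * f y)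
      + (x ^ 2 + gamma * x) * int0inf (fun y => Derive_n a 2 (x + y) * f y)).
  { apply is_derive_unique.
    apply is_derive_ext_loc with
      (f := fun t => (t ^ 2 + gamma * t) * int0inf (fun y => Derive a (t + y) * f y)).
    - apply filter_imp with (2 := locally_pos x Hx). intros t Ht.
      rewrite (is_derive_unique _ _ _ (DA t Ht)). reflexivity.
    - replace (_ + _) with ((2 * x + gamma) * int0inf (fun y => Derive a (x + y) * f y)
          + (x ^ 2 + gamma * x) * int0inf (fun y => Derive_n a 2 (x + y) * f y)) by ring.
      apply (is_derive_mult (fun t => t ^ 2 + gamma * t)); [|exact DB|apply Rmult_comm].
      auto_derive; auto; ring. }
  unfold Lop. rewrite E. ring.
Qed.

Definition concomitant (gamma : R) (a f : R -> R) (x y : R) : R :=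
  (y ^ 2 + gamma * y) * (Derive a (x + y) * f y - a (x + y) * Derive f y).

Section Concomitant.
Variables (alpha beta gamma x : R) (a f : R -> R).
Hypotheses (Hx : 0 < x) (Ca : C2_pos a) (Cf : C2_pos f).
Hypothesis ode : forall t, 0 < t ->
  - (t + gamma) * Derive_n a 2 t - 2 * Derive a t + (alpha * t + beta) * a t = 0.

Lemma is_derive_concomitant (y : R) : 0 < y ->
  is_derive (concomitant gamma a f x) y
    ((2 * y + gamma) * (Derive a (x + y) * f y - a (x + y) * Derive f y)
     + (y ^ 2 + gamma * y)
       * (Derive_n a 2 (x + y) * f y - a (x + y) * Derive_n f 2 y)).
Proof.
  intros Hy. destruct (Ca (x + y)) as [Ha1 [Ha2 _]]; [lra|].
  destruct (Cf y Hy) as [Hf1 [Hf2 _]].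
  change (Derive_n a 2) with (Derive (Derive a)).
  change (Derive_n f 2) with (Derive (Derive f)).
  unfold concomitant. auto_derive; [repeat split; auto |].
  (* auto_derive eta-expands the functions, which ring would treat as new atoms *)
  change (fun t : R => a t) with a. change (fun t : R => Derive a t) with (Derive a).
  change (fun t : R => f t) with f. change (fun t : R => Derive f t) with (Derive f).
  ring.
Qed.

Lemma continuous_Derive_concomitant (y : R) : 0 < y ->
  continuous (Derive (concomitant gamma a f x)) y.
Proof.
  intros Hy. destruct (Ca (x + y)) as [Ha1 [Ha2 Ha3]]; [lra|].
  destruct (Cf y Hy) as [Hf1 [Hf2 Hf3]].
  eapply continuous_ext_loc.
  { apply filter_imp with (2 := locally_pos y Hy). intros t Ht.
    symmetry. apply is_derive_unique. exact (is_derive_concomitant t Ht). }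
  assert (cp : continuous (fun t => t ^ 2 + gamma * t) y)
    by (apply (ex_derive_continuous (fun t => t ^ 2 + gamma * t)); auto_derive; auto).
  assert (cdp : continuous (fun t => 2 * t + gamma) y)
    by (apply (ex_derive_continuous (fun t => 2 * t + gamma)); auto_derive; auto).
  pose proof (continuous_shift _ _ _ (ex_derive_continuous _ _ Ha1)) as ca.
  pose proof (continuous_shift _ _ _ (ex_derive_continuous _ _ Ha2)) as cda.
  pose proof (continuous_shift _ _ _ Ha3) as cdda.
  pose proof (ex_derive_continuous _ _ Hf1) as cf.
  pose proof (ex_derive_continuous _ _ Hf2) as cdf.
  repeat first [ assumption
               | apply continuous_Rmult
               | apply continuous_Rminus
               | apply continuous_Rplus ].
Qed.

Lemma concomitant_at_right_0 :
  filterlim (fun y => (y ^ 2 + gamma * y) * f y) (at_right 0) (locally 0) ->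
  filterlim (fun y => (y ^ 2 + gamma * y) * Derive f y) (at_right 0) (locally 0) ->
  filterlim (concomitant gamma a f x) (at_right 0) (locally 0).
Proof.
  intros Lf Ldf. destruct (Ca x Hx) as [Ha1 [Ha2 _]].
  pose proof (filterlim_shift_at_right _ _ (ex_derive_continuous _ _ Ha1)) as La.
  pose proof (filterlim_shift_at_right _ _ (ex_derive_continuous _ _ Ha2)) as Lda.
  pose proof (filterlim_Rminus _ _ _ _
                (filterlim_Rmult _ _ _ _ Lda Lf) (filterlim_Rmult _ _ _ _ La Ldf)) as L.
  rewrite !Rmult_0_r, Rminus_0_r in L.
  apply filterlim_ext with (2 := L). intros y. unfold concomitant. ring.
Qed.

Lemma concomitant_at_infty :
  is_lim (fun y => Derive a (x + y) * ((y ^ 2 + gamma * y) * f y)) p_infty 0 ->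
  is_lim (fun y => a (x + y) * ((y ^ 2 + gamma * y) * Derive f y)) p_infty 0 ->
  is_lim (concomitant gamma a f x) p_infty 0.
Proof.
  intros L1 L2. pose proof (is_lim_minus' _ _ _ _ _ L1 L2) as L.
  rewrite Rminus_0_r in L.
  apply is_lim_ext with (2 := L). intros y. unfold concomitant. ring.
Qed.

(* The difference of the two sides is (y - x) f(y) times the left-hand side
   of the differential equation for a at x + y. *)
Lemma Hankel_kernel_Lop (y : R) : 0 < y ->
  a (x + y) * Lop alpha beta gamma f y =
    Derive (concomitant gamma a f x) y
    - (2 * x + gamma) * (Derive a (x + y) * f y)
    - (x ^ 2 + gamma * x) * (Derive_n a 2 (x + y) * f y)
    + (alpha * x ^ 2 + beta * x) * (a (x + y) * f y).
Proof.
  intros Hy. destruct (Cf y Hy) as [Hf1 [Hf2 _]].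
  rewrite (is_derive_unique _ _ _ (is_derive_concomitant y Hy)). unfold Lop.
  assert (E : Derive (fun t => (t ^ 2 + gamma * t) * Derive f t) y =
      (2 * y + gamma) * Derive f y + (y ^ 2 + gamma * y) * Derive_n f 2 y).
  { change (Derive_n f 2) with (Derive (Derive f)).
    apply is_derive_unique. auto_derive; [auto|].
    change (fun t : R => Derive f t) with (Derive f). ring. }
  rewrite E.
  assert (Z : (y - x) * f y * (- (x + y + gamma) * Derive_n a 2 (x + y)
           - 2 * Derive a (x + y) + (alpha * (x + y) + beta) * a (x + y)) = 0)
    by (rewrite ode; [ring | lra]).
  lra.
Qed.

Lemma is_RInt_gen_Hankel_Lop :
  filterlim (fun y => (y ^ 2 + gamma * y) * f y) (at_right 0) (locally 0) ->
  filterlim (fun y => (y ^ 2 + gamma * y) * Derive f y) (at_right 0) (locally 0) ->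
  is_lim (fun y => Derive a (x + y) * ((y ^ 2 + gamma * y) * f y)) p_infty 0 ->
  is_lim (fun y => a (x + y) * ((y ^ 2 + gamma * y) * Derive f y)) p_infty 0 ->
  ex_int0inf (fun y => a (x + y) * f y) ->
  ex_int0inf (fun y => Derive a (x + y) * f y) ->
  ex_int0inf (fun y => Derive_n a 2 (x + y) * f y) ->
  is_RInt_gen (fun y => a (x + y) * Lop alpha beta gamma f y)
    (at_right 0) (Rbar_locally p_infty)
    (- (2 * x + gamma) * int0inf (fun y => Derive a (x + y) * f y)
     - (x ^ 2 + gamma * x) * int0inf (fun y => Derive_n a 2 (x + y) * f y)
     + (alpha * x ^ 2 + beta * x) * int0inf (fun y => a (x + y) * f y)).
Proof.
  intros Lf0 Ldf0 Lf1 Ldf1 IA IB IC.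
  pose proof (is_RInt_gen_Derive_pos _ _ _
    (fun y Hy => ex_intro _ _ (is_derive_concomitant y Hy))
    continuous_Derive_concomitant
    (concomitant_at_right_0 Lf0 Ldf0) (concomitant_at_infty Lf1 Ldf1)) as Iconc.
  pose proof (is_RInt_gen_scal _ (- (2 * x + gamma)) _ (is_RInt_gen_int0inf _ IB)) as IB'.
  pose proof (is_RInt_gen_scal _ (- (x ^ 2 + gamma * x)) _ (is_RInt_gen_int0inf _ IC)) as IC'.
  pose proof (is_RInt_gen_scal _ (alpha * x ^ 2 + beta * x) _ (is_RInt_gen_int0inf _ IA)) as IA'.
  pose proof (is_RInt_gen_plus _ _ _ _
    (is_RInt_gen_plus _ _ _ _ (is_RInt_gen_plus _ _ _ _ Iconc IB') IC') IA') as I.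
  replace (_ - _ + _) with (plus (plus (plus (0 - 0)
    (scal (- (2 * x + gamma)) (int0inf (fun y => Derive a (x + y) * f y))))
    (scal (- (x ^ 2 + gamma * x)) (int0inf (fun y => Derive_n a 2 (x + y) * f y))))
    (scal (alpha * x ^ 2 + beta * x) (int0inf (fun y => a (x + y) * f y))))
    by (unfold plus, scal; simpl; unfold mult; simpl; ring).
  apply is_RInt_gen_ext_pos with (2 := I). intros y Hy.
  rewrite Hankel_kernel_Lop by exact Hy.
  unfold plus, scal; simpl; unfold mult; simpl. ring.
Qed.

End Concomitant.

Theorem theorem2p1 (alpha beta gamma : R) (a f : R -> R) :
  0 <= alpha -> 0 <= gamma ->
  C2_pos a ->
  (forall x, 0 < x ->
     - (x + gamma) * Derive_n a 2 x - 2 * Derive a x + (alpha * x + beta) * a x = 0) ->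
  C2_pos f ->
  filterlim (fun y => (y ^ 2 + gamma * y) * f y) (at_right 0) (locally 0) ->
  filterlim (fun y => (y ^ 2 + gamma * y) * Derive f y) (at_right 0) (locally 0) ->
  (forall x, 0 <= x ->
     is_lim (fun y => Derive a (x + y) * ((y ^ 2 + gamma * y) * f y)) p_infty 0) ->
  (forall x, 0 <= x ->
     is_lim (fun y => a (x + y) * ((y ^ 2 + gamma * y) * Derive f y)) p_infty 0) ->
  (forall x, 0 < x -> ex_int0inf (fun y => a (x + y) * f y)) ->
  (forall x, 0 < x -> ex_int0inf (fun y => a (x + y) * Lop alpha beta gamma f y)) ->
  (forall x, 0 < x -> ex_int0inf (fun y => Derive a (x + y) * f y)) ->
  (forall x, 0 < x -> ex_int0inf (fun y => Derive_n a 2 (x + y) * f y)) ->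
  (forall x, 0 < x ->
     is_derive (Hankel a f) x (int0inf (fun y => Derive a (x + y) * f y))) ->
  (forall x, 0 < x ->
     is_derive (fun t => int0inf (fun y => Derive a (t + y) * f y)) x
               (int0inf (fun y => Derive_n a 2 (x + y) * f y))) ->
  forall x, 0 < x ->
    Lop alpha beta gamma (Hankel a f) x = Hankel a (Lop alpha beta gamma f) x.
Proof.
  (* Neither the signs of alpha, gamma nor the integrability of a(x + .) (L f)
     are needed: the latter is a consequence of the computation. *)
  intros _ _ Ca ode Cf Lf0 Ldf0 Lf1 Ldf1 IA _ IB IC DA DB x Hx.
  rewrite (Lop_Hankel alpha beta gamma a f x Hx DA (DB x Hx)).
  symmetry. unfold Hankel at 1 2. unfold int0inf at 1.
  apply (is_RInt_gen_unique (V := R_CompleteNormedModule)).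
  apply (is_RInt_gen_Hankel_Lop alpha beta gamma x a f Hx Ca Cf ode Lf0 Ldf0
           (Lf1 x (Rlt_le _ _ Hx)) (Ldf1 x (Rlt_le _ _ Hx)) (IA x Hx) (IB x Hx) (IC x Hx)).
Qed.
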